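(* The map $(f,z_1,z_2,z_3,\omega_1,\omega_2)\mapsto(z_1,z_2,z_3,\omega_1,\omega_2)$ is a bijection from $\mathrm{Rat}_2^{\mathrm{tm}}$ onto the open subset of $(S^2)^5$ consisting of the $5$-tuples $(z_1,z_2,z_3,\omega_1,\omega_2)$ such that (a) $\omega_1\neq\omega_2$, and (b) for each $i\neq j$ the cross-ratio $$\frac{(z_i-\omega_1)(z_j-\omega_2)}{(z_j-\omega_1)(z_i-\omega_2)}\in\mathbf C\cup\{\infty\}$$ is well defined and different from $-1$. In other words, a totally marked quadratic rational map is uniquely determined by its fixed points and critical points, and exactly the $5$-tuples satisfying (a) and (b) occur.
   Context: $S^2=\hat{\mathbf C}$ is the Riemann sphere. $\mathrm{Rat}_2^{\mathrm{tm}}$ is the space of $6$-tuples $(f,z_1,z_2,z_3,\omega_1,\omega_2)$ where $f$ is a holomorphic degree-$2$ self-map of $S^2$, $z_1,z_2,z_3$ is an ordered list of the fixed points of $f$ with multiplicity (a double or triple fixed point listed twice or three times), and $\omega_1\neq\omega_2$ is an ordering of the two critical points of $f$. Cross-ratios involving $\infty$ are interpreted in the usual way by omitting the corresponding factors. *)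

From HB Require Import structures.
From mathcomp Require Import all_boot all_order all_algebra.
From mathcomp Require Import complex.
From mathcomp Require Import reals.
Set Implicit Arguments. Unset Strict Implicit. Unset Printing Implicit Defensive.
Import Order.TTheory GRing.Theory Num.Theory.
Local Open Scope ring_scope.

Section RiemannSphere.
Variable C : fieldType.

(* The Riemann sphere  C ∪ {∞} :  [Some z] is the point z, [None] is ∞. *)
Definition sphere := option C.

(* f : sphere -> sphere is the rational map z |-> p(z)/q(z), where p, q are
   coprime polynomials and deg f = max (deg p) (deg q) = 2 (i.e. size 3). *)
Definition rat2_rep (f : sphere -> sphere) (p q : {poly C}) : Prop :=
  [/\ coprimep p q, maxn (size p) (size q) = 3%N,
      (forall z : C, f (Some z) =
          if q.[z] != 0 then Some (p.[z] / q.[z]) else None) &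
      f None = if q`_2 != 0 then Some (p`_2 / q`_2) else None].

Definition is_rat2 (f : sphere -> sphere) : Prop := exists p q, rat2_rep f p q.

(* Multiplicity of a point w as a fixed point of z |-> p(z)/q(z):
   the order of vanishing at w of (the dehomogenisation of) the cubic form
   X Q(X,Y) - Y P(X,Y), i.e. of  z q(z) - p(z)  at finite w, and
   3 - deg (z q(z) - p(z)) at w = ∞. *)
Definition fixmult (p q : {poly C}) (w : sphere) : nat :=
  let F := 'X * q - p in
  match w with
  | Some a => mup a F
  | None => (4 - size F)%N
  end.

(* reversed (degree <= 2) polynomial: the expression of p in the chart w = 1/z,
   i.e. r(w) = w^2 p(1/w). *)
Definition rev2 (p : {poly C}) : {poly C} := \poly_(i < 3) p`_(2 - i).

(* Critical points: the derivative of the local expression of f, in the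
   charts z (or 1/z near ∞) at the source and w (or 1/w near ∞) at the target,
   vanishes.  With local expression N/D (D nonzero at the point), the
   derivative is (N' D - N D') / D^2. *)
Definition is_critical (p q : {poly C}) (w : sphere) : Prop :=
  match w with
  | Some a =>
      let: (N, D) := if q.[a] != 0 then (p, q) else (q, p) in
      (N^`() * D - N * D^`()).[a] = 0
  | None =>
      let rp := rev2 p in let rq := rev2 q in
      let: (N, D) := if rq.[0] != 0 then (rp, rq) else (rq, rp) in
      (N^`() * D - N * D^`()).[0] = 0
  end.

Definition rat2tm (f : sphere -> sphere) (z1 z2 z3 w1 w2 : sphere) : Prop :=
  exists p q : {poly C},
    [/\ rat2_rep f p q,
        (forall w : sphere, count_mem w [:: z1; z2; z3] = fixmult p q w),
        w1 != w2 &
        (forall w : sphere, is_critical p q w <-> w = w1 \/ w = w2)].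

Definition hom (w : sphere) : C * C :=
  match w with Some z => (z, 1) | None => (1, 0) end.

(* The "difference" (x - y), computed homogeneously as a 2x2 determinant;
   a factor involving ∞ becomes ±1 (the signs cancel in the cross-ratio),
   which is the usual convention of omitting such factors. *)
Definition hdiff (x y : sphere) : C :=
  (hom x).1 * (hom y).2 - (hom x).2 * (hom y).1.

(* The cross-ratio (a - c)(b - d) / ((b - c)(a - d)) as a point of the sphere,
   or [None] when it is not well defined (0/0). *)
Definition cross_ratio (a b c d : sphere) : option sphere :=
  let num := hdiff a c * hdiff b d in
  let den := hdiff b c * hdiff a d in
  if den != 0 then Some (Some (num / den))
  else if num != 0 then Some None else None.

Definition admissible (z1 z2 z3 w1 w2 : sphere) : Prop :=
  w1 != w2 /\
  forall i j : 'I_3, i != j ->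
    let z := nth None [:: z1; z2; z3] in
    exists v : sphere, cross_ratio (z i) (z j) w1 w2 = Some v /\ v <> Some (-1).

End RiemannSphere.

(* Read p/q as a pair of binary quadratic forms P, Q. Its critical points are
   the zeros of the Jacobian P_x Q_y - P_y Q_x; if they are w1 <> w2, the two
   equations J(w1) = J(w2) = 0 together with Res(P, Q) <> 0 force the polar
   forms of P and Q at (w1, w2) to vanish, i.e. P and Q are combinations of
   l1^2 and l2^2 where l_i vanishes at w_i: in a coordinate sending w1, w2 to
   0, oo the map is z |-> M(z^2) for a Moebius M.  For such pairs, the linear
   map (P, Q) |-> x Q - y P onto the fixed-point cubic is injective, and the
   marked fixed points fix that cubic up to a scalar: this gives uniqueness,
   and solving for M gives an explicit witness.  Its resultant is
   hdiff(w1, w2)^6 times the square of the product over i < j of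
   u_i v_j + u_j v_i, where u_i = hdiff(z_i, w1) and v_i = hdiff(z_i, w2), and
   u_i v_j + u_j v_i vanishes exactly when the cross-ratio of
   (z_i, z_j; w1, w2) is -1 or undefined. *)

From HB Require Import structures.
From mathcomp Require Import all_boot all_order all_algebra.
From mathcomp Require Import complex reals ring.
Set Implicit Arguments. Unset Strict Implicit. Unset Printing Implicit Defensive.
Import Order.TTheory GRing.Theory Num.Theory.
Local Open Scope ring_scope.

Section BinaryQuadraticForms.
Variable F : fieldType.
Implicit Types (p q : {poly F}) (u v w : sphere F).

Definition qform p w : F :=
  p`_2 * (hom w).1 ^+ 2 + p`_1 * (hom w).1 * (hom w).2 + p`_0 * (hom w).2 ^+ 2.

Definition polar p u v : F :=
  2 * p`_2 * (hom u).1 * (hom v).1 + p`_1 * ((hom u).1 * (hom v).2 + (hom v).1 * (hom u).2)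
  + 2 * p`_0 * (hom u).2 * (hom v).2.

(* Half the Jacobian determinant P_x Q_y - P_y Q_x. *)
Definition jacobian p q w : F :=
  (p`_2 * q`_1 - p`_1 * q`_2) * (hom w).1 ^+ 2
  + 2 * (p`_2 * q`_0 - p`_0 * q`_2) * (hom w).1 * (hom w).2
  + (p`_1 * q`_0 - p`_0 * q`_1) * (hom w).2 ^+ 2.

Definition res2 p q : F :=
  (p`_2 * q`_0 - p`_0 * q`_2) ^+ 2 - (p`_2 * q`_1 - p`_1 * q`_2) * (p`_1 * q`_0 - p`_0 * q`_1).

Lemma hdiff_eq0 u v : hdiff u v = 0 <-> u = v.
Proof.
case: u => [a|]; case: v => [b|]; rewrite /hdiff /= ?mulr1 ?mul1r ?mulr0 ?mul0r.
- by split => [/eqP|[->]]; rewrite ?subrr // subr_eq0 => /eqP ->.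
- by rewrite sub0r; split => // /eqP; rewrite oppr_eq0 oner_eq0.
- by rewrite subr0; split => // /eqP; rewrite oner_eq0.
- by rewrite subrr.
Qed.

Lemma hdiffxx u : hdiff u u = 0.
Proof. by rewrite /hdiff mulrC subrr. Qed.

Lemma hdiff_neq0 u v : u != v -> hdiff u v != 0.
Proof. by apply: contra_neq => /hdiff_eq0. Qed.

Lemma horner_size3 p x : (size p <= 3)%N -> p.[x] = p`_0 + p`_1 * x + p`_2 * x ^+ 2.
Proof.
move=> sp; rewrite (horner_coef_wide _ sp) !big_ord_recl big_ord0 /=.
by rewrite expr0 expr1 mulr1 addr0 addrA.
Qed.

Lemma size_deriv_le p : (size p^`() <= size p)%N.
Proof. by have [->|/lt_size_deriv/ltnW //] := eqVneq p 0; rewrite deriv0. Qed.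

Lemma jacobianC p q w : jacobian q p w = - jacobian p q w.
Proof. rewrite /jacobian; ring. Qed.

Lemma wronskian_horner p q x : (size p <= 3)%N -> (size q <= 3)%N ->
  (p^`() * q - p * q^`()).[x] = jacobian p q (Some x).
Proof.
move=> sp sq; have sd (r : {poly F}) : (size r <= 3 -> size r^`() <= 3)%N.
  exact: leq_trans (size_deriv_le r).
rewrite hornerD hornerN !hornerM !horner_size3 ?sd // !coef_deriv /jacobian /=.
rewrite [p`_3]nth_default // [q`_3]nth_default //; ring.
Qed.

Lemma wronskian_horner0 p q : (p^`() * q - p * q^`()).[0] = p`_1 * q`_0 - p`_0 * q`_1.
Proof. by rewrite horner_coef0 coefB !coef0M !coef_deriv. Qed.

Lemma coef_rev2 p : [/\ (rev2 p)`_0 = p`_2 & (rev2 p)`_1 = p`_1].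
Proof. by rewrite /rev2 !coef_poly. Qed.

Lemma critical_jacobianE p q w : (size p <= 3)%N -> (size q <= 3)%N ->
  is_critical p q w <-> jacobian p q w = 0.
Proof.
move=> sp sq; have oppr_eq0P (J : F) : - J = 0 <-> J = 0.
  by split=> [/eqP|->]; rewrite ?oppr0 // oppr_eq0 => /eqP.
case: w => [a|] /=.
  by case: ifP => _; rewrite wronskian_horner // jacobianC oppr_eq0P.
have [[rp0 rp1] [rq0 rq1]] := (coef_rev2 p, coef_rev2 q).
have -> : jacobian p q None = p`_2 * q`_1 - p`_1 * q`_2 by rewrite /jacobian /=; ring.
case: ifP => _; rewrite wronskian_horner0 rp0 rp1 rq0 rq1.
  by rewrite -oppr_eq0P opprB.
by rewrite mulrC [q`_2 * _]mulrC.
Qed.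

Lemma polarC p u v : polar p u v = polar p v u.
Proof. rewrite /polar; ring. Qed.

Lemma polarB p p' u v : polar (p - p') u v = polar p u v - polar p' u v.
Proof. rewrite /polar !coefB; ring. Qed.

Lemma polarZ c p u v : polar (c *: p) u v = c * polar p u v.
Proof. rewrite /polar !coefZ; ring. Qed.

Lemma jacobian_polar p q u v :
  hdiff u v * jacobian p q u = qform p u * polar q u v - polar p u v * qform q u.
Proof. rewrite /hdiff /jacobian /qform /polar; ring. Qed.

Lemma res2_polar p q u v :
  hdiff u v ^+ 4 * res2 p q =
    (qform p v * qform q u - qform p u * qform q v) ^+ 2
    - (qform p v * polar q u v - polar p u v * qform q v)
      * (polar p u v * qform q u - qform p u * polar q u v).
Proof. rewrite /hdiff /res2 /qform /polar; ring. Qed.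

Lemma critical_polar_eq0 p q u v : u != v -> res2 p q != 0 ->
  jacobian p q u = 0 -> jacobian p q v = 0 -> polar p u v = 0 /\ polar q u v = 0.
Proof.
move=> neq_uv res_neq0 Ju Jv.
have duv := hdiff_neq0 neq_uv.
have Xu : polar p u v * qform q u - qform p u * polar q u v = 0.
  by apply/eqP; rewrite -oppr_eq0 opprB -jacobian_polar Ju mulr0.
have Yv : qform p v * polar q u v - polar p u v * qform q v = 0.
  by rewrite (polarC p) (polarC q) -jacobian_polar Jv mulr0.
move: Xu Yv (res2_polar p q u v).
set a := qform p v; set b := qform p u; set c := qform q v; set d := qform q u.
set P := polar p u v; set Q := polar q u v => Xu Yv res_uv.
have N_neq0 : a * d - b * c != 0.
  apply: contra_neq res_neq0 => N0.
  apply: (@mulfI _ (hdiff u v ^+ 4)); first exact: expf_neq0.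
  by rewrite mulr0 res_uv N0 Xu Yv; ring.
have P_N : P * (a * d - b * c) = a * (P * d - b * Q) + b * (a * Q - P * c) by ring.
have Q_N : Q * (a * d - b * c) = c * (P * d - b * Q) + d * (a * Q - P * c) by ring.
rewrite Xu Yv !mulr0 addr0 in P_N Q_N.
by split; apply: (mulIf N_neq0); rewrite mul0r.
Qed.

Lemma size3_eq0 p : (size p <= 3)%N -> p`_0 = 0 -> p`_1 = 0 -> p`_2 = 0 -> p = 0.
Proof.
move=> sp p0 p1 p2; apply/polyP => i; rewrite coef0.
by case: i => [|[|[|i]]] //; rewrite nth_default // (leq_trans sp).
Qed.

Lemma fixpoly_polar_eq0 p q u v : (size p <= 3)%N -> (size q <= 3)%N -> u != v ->
  polar p u v = 0 -> polar q u v = 0 -> 'X * q = p -> q = 0.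
Proof.
move=> sp sq neq_uv Pp Pq pE.
have duv := hdiff_neq0 neq_uv.
(* p = X q leaves the unknowns q_0, q_1, and the two polar equations in them
   have determinant -hdiff u v ^+ 2. *)
have [p0 p1 p2] : [/\ p`_0 = 0, p`_1 = q`_0 & p`_2 = q`_1] by rewrite -pE !coefXM; split.
have q2 : q`_2 = 0 by have := coefXM q 3; rewrite pE nth_default.
have q0E : hdiff u v ^+ 2 * q`_0 =
    ((hom u).1 * (hom v).2 + (hom v).1 * (hom u).2) * polar p u v
    - 2 * (hom u).1 * (hom v).1 * polar q u v.
  by rewrite /polar /hdiff p0 p1 p2 q2; ring.
have q1E : hdiff u v ^+ 2 * q`_1 =
    ((hom u).1 * (hom v).2 + (hom v).1 * (hom u).2) * polar q u v
    - 2 * (hom u).2 * (hom v).2 * polar p u v.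
  by rewrite /polar /hdiff p0 p1 p2 q2; ring.
rewrite Pp Pq !mulr0 subr0 in q0E q1E.
apply: size3_eq0 => //; apply: (mulfI (expf_neq0 2 duv)); by rewrite mulr0.
Qed.

Lemma fixpoly_polar_inj p q p' q' u v :
    (size p <= 3)%N -> (size q <= 3)%N -> (size p' <= 3)%N -> (size q' <= 3)%N -> u != v ->
    polar p u v = 0 -> polar q u v = 0 -> polar p' u v = 0 -> polar q' u v = 0 ->
  'X * q - p = 'X * q' - p' -> p = p' /\ q = q'.
Proof.
move=> sp sq sp' sq' neq_uv Pp Pq Pp' Pq' fixE.
have size_sub (r r' : {poly F}) :
    (size r <= 3)%N -> (size r' <= 3)%N -> (size (r - r')%R <= 3)%N.
  by move=> sr sr'; rewrite (leq_trans (size_polyD _ _)) // size_polyN geq_max sr sr'.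
have dfixE : 'X * (q - q') = p - p'.
  apply/eqP; rewrite -subr_eq0; apply/eqP.
  have -> : 'X * (q - q') - (p - p') = ('X * q - p) - ('X * q' - p') by ring.
  by rewrite fixE subrr.
have dq0 : q - q' = 0.
  apply: (fixpoly_polar_eq0 _ _ neq_uv _ _ dfixE); rewrite ?size_sub ?polarB //.
  - by rewrite Pp Pp' subrr.
  - by rewrite Pq Pq' subrr.
have eq_q : q = q' by apply/eqP; rewrite -subr_eq0 dq0.
by split=> //; apply/eqP; rewrite -subr_eq0 -dfixE dq0 mulr0.
Qed.

Lemma res2C p q : res2 q p = res2 p q.
Proof. rewrite /res2; ring. Qed.

Lemma res2Z c p q : res2 (c *: p) (c *: q) = c ^+ 4 * res2 p q.
Proof. rewrite /res2 !coefZ; ring. Qed.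

Lemma res2_bezout p q x : (size p <= 3)%N -> (size q <= 3)%N ->
  res2 p q =
    (p`_2 * q.[x] - q`_2 * p.[x]) * (p`_2 * q`_0 - p`_0 * q`_2 + (p`_1 * q`_2 - p`_2 * q`_1) * x)
    + (p`_1 * q`_2 - p`_2 * q`_1) * (p`_1 * q.[x] - q`_1 * p.[x]).
Proof. by move=> sp sq; rewrite !horner_size3 // /res2; ring. Qed.

Lemma res2_size p q : (size p <= 3)%N -> (size q <= 3)%N -> res2 p q != 0 ->
  maxn (size p) (size q) = 3%N.
Proof.
move=> sp sq; apply: contraNeq => max_neq3.
have [p2 q2] : p`_2 = 0 /\ q`_2 = 0.
  by split; apply: nth_default; move: max_neq3; rewrite eqn_leq geq_max sp sq leq_max /=;
    rewrite negb_or -!ltnNge !ltnS => /andP[].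
by apply/eqP; rewrite /res2 p2 q2; ring.
Qed.

Lemma res2_factor p c r1 r2 : (size p <= 3)%N ->
  res2 p (c *: (('X - r1%:P) * ('X - r2%:P))) = c ^+ 2 * (p.[r1] * p.[r2]).
Proof.
move=> sp; rewrite !horner_size3 //.
have -> : c *: (('X - r1%:P) * ('X - r2%:P)) =
    (c * (r1 * r2))%:P - (c * (r1 + r2))%:P * 'X + c%:P * 'X^2.
  by rewrite -mul_polyC; ring.
rewrite /res2 !coefE /=; ring.
Qed.

End BinaryQuadraticForms.

Section SpherePolynomials.
Variable F : fieldType.
Implicit Types (u v w : sphere F) (zs : seq (sphere F)).

(* [lin w] is the linear form vanishing at w and [root_poly zs] the form with
   zero set zs; a point oo of zs contributes only the constant factor -1. *)
Definition lin w : {poly F} := (hom w).2%:P * 'X - (hom w).1%:P.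
Definition root_poly (zs : seq (sphere F)) : {poly F} := \prod_(z <- zs) lin z.

Lemma root_polyE zs :
  root_poly zs = (-1) ^+ count_mem None zs * \prod_(a <- pmap id zs) ('X - a%:P).
Proof.
elim: zs => [|z zs IH]; first by rewrite /root_poly !big_nil expr0 mul1r.
rewrite /root_poly big_cons -/(root_poly zs) IH /lin; case: z => [a|] /=.
  by rewrite big_cons add0n mul1r; ring.
by rewrite add1n exprS mul0r sub0r; ring.
Qed.

Lemma count_mem_Some a zs : count_mem (Some a) zs = count_mem a (pmap id zs).
Proof. by elim: zs => [|[b|] zs IH] //=; rewrite IH. Qed.

Lemma mup_root_poly a zs : mup a (root_poly zs) = count_mem (Some a) zs.
Proof.
rewrite root_polyE mupMr ?mu_prod_XsubC ?count_mem_Some //.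
by rewrite /root horner_exp hornerN hornerC expf_neq0 // oppr_eq0 oner_eq0.
Qed.

Lemma count_None_size zs : (count_mem None zs + size (pmap id zs))%N = size zs.
Proof. by elim: zs => [|[b|] zs IH] //=; rewrite -IH ?addnS ?add1n. Qed.

Lemma size_root_poly zs : size (root_poly zs) = (size (pmap id zs)).+1.
Proof.
rewrite root_polyE -signr_odd.
by case: odd; rewrite ?expr1 ?expr0 ?mul1r ?mulN1r ?size_polyN size_prod_XsubC.
Qed.

Definition sq_comb (A B : F) u v : {poly F} := A *: lin u ^+ 2 + B *: lin v ^+ 2.

Lemma sq_combE A B u v : sq_comb A B u v =
  (A * (hom u).1 ^+ 2 + B * (hom v).1 ^+ 2)%:P
  - (2 * (A * (hom u).1 * (hom u).2 + B * (hom v).1 * (hom v).2))%:P * 'X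
  + (A * (hom u).2 ^+ 2 + B * (hom v).2 ^+ 2)%:P * 'X ^+ 2.
Proof. rewrite /sq_comb /lin -!mul_polyC; ring. Qed.

Lemma coef_sq_comb A B u v :
  [/\ (sq_comb A B u v)`_0 = A * (hom u).1 ^+ 2 + B * (hom v).1 ^+ 2,
      (sq_comb A B u v)`_1 = - (2 * (A * (hom u).1 * (hom u).2 + B * (hom v).1 * (hom v).2)) &
      (sq_comb A B u v)`_2 = A * (hom u).2 ^+ 2 + B * (hom v).2 ^+ 2].
Proof. rewrite sq_combE !coefE /=; split; ring. Qed.

Lemma size_sq_comb A B u v : (size (sq_comb A B u v) <= 3)%N.
Proof.
by apply/leq_sizeP => -[|[|[|j]]] // _; rewrite sq_combE !coefE /=; ring.
Qed.

Lemma polar_sq_comb A B u v : polar (sq_comb A B u v) u v = 0.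
Proof. by have [c0 c1 c2] := coef_sq_comb A B u v; rewrite /polar c0 c1 c2; ring. Qed.

Lemma jacobian_sq_comb A B C D u v w :
  jacobian (sq_comb A B u v) (sq_comb C D u v) w =
    2 * (A * D - B * C) * hdiff u v * (hdiff w u * hdiff w v).
Proof.
have [p0 p1 p2] := coef_sq_comb A B u v; have [q0 q1 q2] := coef_sq_comb C D u v.
by rewrite /jacobian p0 p1 p2 q0 q1 q2 /hdiff; ring.
Qed.

Lemma res2_sq_comb A B C D u v :
  res2 (sq_comb A B u v) (sq_comb C D u v) = (A * D - B * C) ^+ 2 * hdiff u v ^+ 4.
Proof.
have [p0 p1 p2] := coef_sq_comb A B u v; have [q0 q1 q2] := coef_sq_comb C D u v.
by rewrite /res2 p0 p1 p2 q0 q1 q2 /hdiff; ring.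
Qed.

End SpherePolynomials.

Section CrossRatio.
Variable F : fieldType.
Implicit Types a b c d : sphere F.

Definition cr_sum a b c d : F := hdiff a c * hdiff b d + hdiff b c * hdiff a d.

Lemma cr_sumC a b c d : cr_sum b a c d = cr_sum a b c d.
Proof. by rewrite /cr_sum addrC. Qed.

Lemma cross_ratio_neqN1 a b c d :
  (exists v, cross_ratio a b c d = Some v /\ v <> Some (-1)) <-> cr_sum a b c d != 0.
Proof.
rewrite /cr_sum /cross_ratio /=.
set num := hdiff a c * hdiff b d; set den := hdiff b c * hdiff a d.
have [den0|den_neq0] := eqVneq den 0.
  rewrite den0 addr0; case: eqVneq => [->|num_neq0] /=.
    by split=> // -[v []].
  by split=> // _; exists None.
split=> [[_ [[<-]] numN1]|sum_neq0].
  apply/eqP => sum0; apply: numN1.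
  by rewrite (_ : num = - den) ?mulNr ?divff //; apply/eqP; rewrite -addr_eq0 sum0.
exists (Some (num / den)); split=> // -[] /(congr1 ( *%R^~ den)).
by rewrite divfK // mulN1r => num_eq; rewrite num_eq addNr eqxx in sum_neq0.
Qed.

Definition cr_prod z1 z2 z3 w1 w2 : F :=
  cr_sum z1 z2 w1 w2 * cr_sum z1 z3 w1 w2 * cr_sum z2 z3 w1 w2.

Lemma admissibleE z1 z2 z3 w1 w2 :
  admissible z1 z2 z3 w1 w2 <-> w1 != w2 /\ cr_prod z1 z2 z3 w1 w2 != 0.
Proof.
rewrite /admissible /cr_prod !mulf_eq0 !negb_or -andbA; split=> -[w12 cr]; split=> //.
  have cr_ok i j (hi : (i < 3)%N) (hj : (j < 3)%N) : i != j ->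
      cr_sum (nth None [:: z1; z2; z3] i) (nth None [:: z1; z2; z3] j) w1 w2 != 0.
    by move=> ij; apply/cross_ratio_neqN1/(cr (Ordinal hi) (Ordinal hj)).
  by rewrite (cr_ok 0 1) ?(cr_ok 0 2) ?(cr_ok 1 2).
move: cr => /and3P[cr12 cr13 cr23] [[|[|[|i]]] hi] [[|[|[|j]]] hj] //= _;
  by apply/cross_ratio_neqN1; rewrite // cr_sumC.
Qed.

End CrossRatio.

Section Witness.
Variable F : fieldType.
Variables z1 z2 z3 w1 w2 : sphere F.

Let u1 := hdiff z1 w1. Let u2 := hdiff z2 w1. Let u3 := hdiff z3 w1.
Let v1 := hdiff z1 w2. Let v2 := hdiff z2 w2. Let v3 := hdiff z3 w2.
Let s0 := u1 * u2 * u3.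
Let s1 := u1 * u2 * v3 + u1 * v2 * u3 + v1 * u2 * u3.
Let s2 := u1 * v2 * v3 + v1 * u2 * v3 + v1 * v2 * u3.
Let s3 := v1 * v2 * v3.

(* In the frame [s : t] |-> s w1 + t w2 the fixed-point cubic of the sought
   map must be proportional to prod_i (u_i s + v_i t) =
   s0 s^3 + s1 s^2 t + s2 s t^2 + s3 t^3; matching it against x Q - y P, with
   P and Q combinations of l1^2 = (D t)^2 and l2^2 = (D s)^2 where
   D = hdiff w1 w2, yields the coefficients below. *)
Definition tm_num : {poly F} :=
  sq_comb (s3 * (hom w1).1 - s2 * (hom w2).1) (s1 * (hom w1).1 - s0 * (hom w2).1) w1 w2.
Definition tm_den : {poly F} :=
  sq_comb (s3 * (hom w1).2 - s2 * (hom w2).2) (s1 * (hom w1).2 - s0 * (hom w2).2) w1 w2.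

Lemma tm_fixpoly : 'X * tm_den - tm_num = hdiff w1 w2 ^+ 3 *: root_poly [:: z1; z2; z3].
Proof.
rewrite /tm_num /tm_den /root_poly !big_cons big_nil /sq_comb /lin /s0 /s1 /s2 /s3.
by rewrite /u1 /u2 /u3 /v1 /v2 /v3 /hdiff -!mul_polyC; ring.
Qed.

Lemma tm_det :
  (s3 * (hom w1).1 - s2 * (hom w2).1) * (s1 * (hom w1).2 - s0 * (hom w2).2)
  - (s1 * (hom w1).1 - s0 * (hom w2).1) * (s3 * (hom w1).2 - s2 * (hom w2).2)
  = hdiff w1 w2 * cr_prod z1 z2 z3 w1 w2.
Proof.
rewrite /cr_prod /cr_sum /s0 /s1 /s2 /s3 /u1 /u2 /u3 /v1 /v2 /v3 /hdiff; ring.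
Qed.

Lemma jacobian_tm w :
  jacobian tm_num tm_den w =
    2 * hdiff w1 w2 ^+ 2 * cr_prod z1 z2 z3 w1 w2 * (hdiff w w1 * hdiff w w2).
Proof. by rewrite jacobian_sq_comb tm_det; ring. Qed.

Lemma res2_tm : res2 tm_num tm_den = hdiff w1 w2 ^+ 6 * cr_prod z1 z2 z3 w1 w2 ^+ 2.
Proof. by rewrite res2_sq_comb tm_det; ring. Qed.

End Witness.

Section RationalMaps.
Variable F : fieldType.
Implicit Types (p q : {poly F}) (zs : seq (sphere F)).

Definition ratmap p q (w : sphere F) : sphere F :=
  match w with
  | Some z => if q.[z] != 0 then Some (p.[z] / q.[z]) else None
  | None => if q`_2 != 0 then Some (p`_2 / q`_2) else None
  end.

Lemma rat2_repE f p q : rat2_rep f p q -> f = ratmap p q.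
Proof. by move=> [_ _ f_fin f_inf]; apply: boolp.funext => -[z|]. Qed.

Lemma rat2_rep_ratmap p q :
  coprimep p q -> maxn (size p) (size q) = 3%N -> rat2_rep (ratmap p q) p q.
Proof. by []. Qed.

Lemma ratmapZ c p q : c != 0 -> ratmap (c *: p) (c *: q) = ratmap p q.
Proof.
move=> c_neq0; apply: boolp.funext => -[z|] /=; rewrite ?hornerZ ?coefZ mulf_eq0 (negPf c_neq0) /=;
  by case: ifP => // _; rewrite -mulf_div divff // mul1r.
Qed.

Lemma fixmult_root_poly p q c zs : c != 0 -> size zs = 3%N ->
  'X * q - p = c *: root_poly zs -> forall w, count_mem w zs = fixmult p q w.
Proof.
move=> c_neq0 size_zs fixE [a|]; rewrite /fixmult fixE.
  by rewrite -mul_polyC mupMr ?rootC // mup_root_poly.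
rewrite size_scale // size_root_poly -(count_None_size zs) in size_zs *.
by rewrite subSS -size_zs addnK.
Qed.

End RationalMaps.

Section ClosedField.
Variable F : closedFieldType.
Implicit Types (p q : {poly F}) (zs : seq (sphere F)).

Lemma res2_coprime p q : (size p <= 3)%N -> (size q <= 3)%N -> res2 p q != 0 ->
  coprimep p q.
Proof.
move=> sp sq res_neq0; apply: Pdiv.ClosedField.root_coprimep => x /eqP px.
apply: contra_neq res_neq0 => qx.
by rewrite (res2_bezout x sp sq) px qx; ring.
Qed.

Lemma coprime_res2 p q : coprimep p q -> maxn (size p) (size q) = 3%N -> res2 p q != 0.
Proof.
wlog sq3 : p q / size q = 3%N => [hwlog cop max3|cop max3].
  have [sq3|sq_neq3] := eqVneq (size q) 3%N; first exact: hwlog.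
  have sp3 : size p = 3%N.
    by move: max3 sq_neq3; rewrite /maxn; case: ltnP => // _ ->; rewrite eqxx.
  by rewrite -res2C hwlog // 1?coprimep_sym // maxnC.
have sp : (size p <= 3)%N by rewrite -max3 leq_maxl.
have [rs qE] := closed_field_poly_normal q.
have lc_neq0 : lead_coef q != 0 by rewrite lead_coef_eq0 -size_poly_gt0 sq3.
have [r1 [r2 rsE]] : exists r1 r2, rs = [:: r1; r2].
  move: sq3; rewrite qE size_scale // size_prod_XsubC.
  by case: rs {qE} => [|r1 [|r2 []]] // _; exists r1, r2.
have p_neq0 r : r \in rs -> p.[r] != 0.
  move=> r_rs; apply: (@coprimep_root _ q); first by rewrite coprimep_sym.
  by rewrite qE rootZ // root_prod_XsubC.
rewrite qE rsE !big_cons big_nil mulr1 res2_factor // !mulf_neq0 ?expf_neq0 //.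
  by apply: p_neq0; rewrite rsE mem_head.
by apply: p_neq0; rewrite rsE !inE eqxx orbT.
Qed.

Lemma fixpoly_root_poly p q zs : 'X * q - p != 0 ->
    (forall w, count_mem w zs = fixmult p q w) ->
  exists2 c, c != 0 & 'X * q - p = c *: root_poly zs.
Proof.
set G := 'X * q - p => G_neq0 mult.
have [rs GE] := closed_field_poly_normal G.
have lc_neq0 : lead_coef G != 0 by rewrite lead_coef_eq0.
have perm_rs : perm_eq rs (pmap id zs).
  apply/allP => x _ /=; apply/eqP.
  by rewrite -count_mem_Some mult /fixmult -/G -mu_prod_XsubC GE -mul_polyC mupMr ?rootC.
exists (lead_coef G * (-1) ^+ count_mem None zs); first by rewrite mulf_neq0 ?signr_eq0.
rewrite {1}GE (perm_big _ perm_rs) root_polyE -scalerA; congr (_ *: _).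
by rewrite -mul_polyC mulrA rmorph_sign -expr2 sqrr_sign mul1r.
Qed.

End ClosedField.

Section TotallyMarkedMaps.
Variable F : closedFieldType.
Variables z1 z2 z3 w1 w2 : sphere F.

Let Ps := tm_num z1 z2 z3 w1 w2.
Let Qs := tm_den z1 z2 z3 w1 w2.

Lemma rat2tm_witness f : rat2tm f z1 z2 z3 w1 w2 ->
  w1 != w2 /\ exists2 mu, mu != 0 & rat2_rep f (mu *: Ps) (mu *: Qs).
Proof.
move=> [p [q [rep mult w12 crit]]]; split=> //.
have [cop max3 _ _] := rep.
have sp : (size p <= 3)%N by rewrite -max3 leq_maxl.
have sq : (size q <= 3)%N by rewrite -max3 leq_maxr.
have res_neq0 := coprime_res2 cop max3.
have [Pp Pq] : polar p w1 w2 = 0 /\ polar q w1 w2 = 0.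
  by apply: critical_polar_eq0 => //;
    apply/(critical_jacobianE _ sp sq)/crit; [left | right].
have fix_neq0 : 'X * q - p != 0.
  apply: contra_neq res_neq0 => /eqP; rewrite subr_eq0 => /eqP pE.
  by rewrite -pE (fixpoly_polar_eq0 sp sq w12 Pp Pq pE) mulr0 /res2 !coef0; ring.
have [c c_neq0 fixE] := fixpoly_root_poly fix_neq0 mult.
have hd3_neq0 : hdiff w1 w2 ^+ 3 != 0 by rewrite expf_neq0 ?hdiff_neq0.
exists (c / hdiff w1 w2 ^+ 3); first by rewrite mulf_neq0 ?invr_eq0.
set mu := c / _.
suff [<- <-] : p = mu *: Ps /\ q = mu *: Qs by [].
have size_tm (r : {poly F}) : (size r <= 3 -> size (mu *: r) <= 3)%N.
  exact: leq_trans (size_scale_leq _ _).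
apply: (fixpoly_polar_inj sp sq _ _ w12 Pp Pq); rewrite ?size_tm ?size_sq_comb //.
- by rewrite polarZ polar_sq_comb mulr0.
- by rewrite polarZ polar_sq_comb mulr0.
by rewrite fixE -scalerAr -scalerBr tm_fixpoly scalerA divfK.
Qed.

Lemma rat2tm_admissible f : rat2tm f z1 z2 z3 w1 w2 -> admissible z1 z2 z3 w1 w2.
Proof.
move=> /rat2tm_witness[w12 [mu mu_neq0 [cop max3 _ _]]].
apply/admissibleE; split=> //.
have := coprime_res2 cop max3; rewrite res2Z res2_tm.
by apply: contra_neq => ->; rewrite expr0n !mulr0.
Qed.

Lemma rat2tm_unique f : rat2tm f z1 z2 z3 w1 w2 -> f = ratmap Ps Qs.
Proof. by move=> /rat2tm_witness[_ [mu mu_neq0 /rat2_repE ->]]; rewrite ratmapZ. Qed.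

Hypothesis two_neq0 : (2 : F) != 0.

Lemma rat2tm_ratmap_tm : w1 != w2 -> cr_prod z1 z2 z3 w1 w2 != 0 ->
  rat2tm (ratmap Ps Qs) z1 z2 z3 w1 w2.
Proof.
move=> w12 cr_neq0.
have hd_neq0 := hdiff_neq0 w12.
have res_neq0 : res2 Ps Qs != 0 by rewrite res2_tm mulf_neq0 ?expf_neq0.
have [sP sQ] : (size Ps <= 3)%N /\ (size Qs <= 3)%N by split; apply: size_sq_comb.
exists Ps, Qs; split=> //.
- by apply: rat2_rep_ratmap; [exact: res2_coprime | exact: res2_size].
- by apply: (fixmult_root_poly _ _ (tm_fixpoly _ _ _ _ _)); rewrite ?expf_neq0.
move=> w; apply: (iff_trans (critical_jacobianE _ sP sQ)); rewrite jacobian_tm.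
have c_neq0 : 2 * hdiff w1 w2 ^+ 2 * cr_prod z1 z2 z3 w1 w2 != 0.
  by rewrite mulf_neq0 // mulf_neq0 ?expf_neq0.
split=> [/eqP|wE].
  by rewrite mulf_eq0 (negPf c_neq0) /= mulf_eq0 => /orP[] /eqP /hdiff_eq0; [left | right].
by case: wE => ->; rewrite hdiffxx ?mul0r ?mulr0.
Qed.

End TotallyMarkedMaps.

Theorem mainTheorem15 (R : realType) :
  (forall (f : sphere R[i] -> sphere R[i]) (z1 z2 z3 w1 w2 : sphere R[i]),
      rat2tm f z1 z2 z3 w1 w2 -> admissible z1 z2 z3 w1 w2) /\
  (forall z1 z2 z3 w1 w2 : sphere R[i],
      admissible z1 z2 z3 w1 w2 ->
      exists f : sphere R[i] -> sphere R[i],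
        rat2tm f z1 z2 z3 w1 w2 /\
        (forall g : sphere R[i] -> sphere R[i], rat2tm g z1 z2 z3 w1 w2 -> g = f)).
Proof.
have two_neq0 : (2 : R[i]) != 0 by rewrite pnatr_eq0.
split=> [f z1 z2 z3 w1 w2 | z1 z2 z3 w1 w2 /admissibleE[w12 cr_neq0]].
  exact: rat2tm_admissible.
exists (ratmap (tm_num z1 z2 z3 w1 w2) (tm_den z1 z2 z3 w1 w2)).
split; first exact: rat2tm_ratmap_tm.
by move=> g; apply: rat2tm_unique.
Qed.
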